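(* There exist infinitely many graphs which are $1$-critical but not $0$-critical.
   Context: All graphs are finite and simple; $\mathrm{Forb}(H)$ is the family of graphs with no induced subgraph isomorphic to $H$. A family is hereditary if closed under isomorphism and induced subgraphs. $\mathcal{H}(s,t)$ is the family of graphs whose vertex set can be partitioned into $s$ stable sets and $t$ cliques. For a hereditary family $\mathcal{F}$, $\chi_c(\mathcal{F})$ is the maximum integer $l$ such that $\mathcal{H}(s,l-s)\subseteq\mathcal{F}$ for some $0\le s\le l$. Let $l=\chi_c(\mathcal{F})$. A graph $J$ is $\mathcal{F}$-reduced if there is an integer $0\le s\le l-1$ such that $\mathcal{F}$ contains every graph whose vertex set can be partitioned into $l$ parts, the first of which induces a graph isomorphic to an induced subgraph of $J$, $s$ of the remaining parts are stable sets and the other $l-1-s$ are cliques; $\mathrm{red}(\mathcal{F})$ is the family of $\mathcal{F}$-reduced graphs. A graph $G$ is an $s$-star (for an integer $s\ge0$) if there is $S\subseteq V(G)$ with $|S|\le s$ such that $G-S$ is complete or edgeless and every vertex of $S$ is adjacent either to all vertices of $V(G)\setminus S$ or to none of them (so $0$-stars are exactly complete or edgeless graphs). A hereditary family $\mathcal{F}$ is $s$-critical if there exists $n_0$ such that every $K\in\mathrm{red}(\mathcal{F})$ with $|V(K)|\ge n_0$ is an $s$-star. A graph $H$ is $s$-critical if $\mathrm{Forb}(H)$ is $s$-critical. *)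

From mathcomp Require Import all_boot.
Set Implicit Arguments. Unset Strict Implicit. Unset Printing Implicit Defensive.

Record graph := Graph {
  V : finType;
  adj : rel V;
  adj_sym : symmetric adj;
  adj_irr : irreflexive adj
}.

Definition embeds (G H : graph) : Prop :=
  exists f : V G -> V H, injective f /\
    forall x y, adj (f x) (f y) = adj x y.

Definition iso (G H : graph) : Prop :=
  exists f : V G -> V H, bijective f /\
    forall x y, adj (f x) (f y) = adj x y.

Definition family := graph -> Prop.

Definition hereditary (F : family) : Prop :=
  (forall G H, iso G H -> F G -> F H) /\
  (forall G H, embeds H G -> F G -> F H).

Definition Forb (H : graph) : family := fun G => ~ embeds H G.

Definition stable_part (G : graph) (P : pred (V G)) : Prop :=
  forall x y, P x -> P y -> ~~ adj x y.

Definition clique_part (G : graph) (P : pred (V G)) : Prop :=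
  forall x y, P x -> P y -> x != y -> adj x y.

(* H(s,t): vertex set partitioned into s stable sets (parts 0..s-1)
   and t cliques (parts s..s+t-1); parts may be empty. *)
Definition Hst (s t : nat) : family := fun G =>
  exists p : V G -> 'I_(s + t),
    forall i : 'I_(s + t),
      if (i < s)%N then stable_part (fun x => p x == i)
      else clique_part (fun x => p x == i).

Definition subfam (F1 F2 : family) : Prop := forall G, F1 G -> F2 G.

Definition chi_c_ok (F : family) (l : nat) : Prop :=
  exists2 s, (s <= l)%N & subfam (Hst s (l - s)) F.

Definition is_chi_c (F : family) (l : nat) : Prop :=
  chi_c_ok F l /\ forall l', chi_c_ok F l' -> (l' <= l)%N.

Definition part_embeds (G : graph) (P : pred (V G)) (J : graph) : Prop :=
  exists f : V G -> V J,
    forall x y, P x -> P y -> (f x = f y -> x = y) /\ adj (f x) (f y) = adj x y.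

Definition reduced (F : family) (J : graph) : Prop :=
  exists l, is_chi_c F l /\
  exists2 s, (s < l)%N &
    forall G (p : V G -> 'I_l),
      (forall i : 'I_l,
         if val i == 0%N then part_embeds (fun x => p x == i) J
         else if (val i <= s)%N then stable_part (fun x => p x == i)
         else clique_part (fun x => p x == i)) ->
      F G.

Definition star (s : nat) (G : graph) : Prop :=
  exists S : {set V G}, (#|S| <= s)%N /\
    (stable_part (fun x => x \notin S) \/ clique_part (fun x => x \notin S)) /\
    forall v, v \in S ->
      (forall x, x \notin S -> adj v x) \/ (forall x, x \notin S -> ~~ adj v x).

Definition critical_family (s : nat) (F : family) : Prop :=
  exists n0 : nat, forall K, reduced F K -> (n0 <= #|V K|)%N -> star s K.

Definition critical (s : nat) (H : graph) : Prop := critical_family s (Forb H).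

(** The witnesses are H_n = E1 + (n+1) K3, where E1 is a fixed 9-vertex graph. The key fact is
that no set inducing a subgraph of a star, together with n+3 cliques, covers H_n: outside such a
set E1 keeps three independent vertices (a finite check) and every triangle keeps a vertex, which
gives n+4 independent vertices. Hence H(1,n+3) lies in Forb(H_n), and explicit partitions put H_n
in H(0,n+4), H(2,n+2) and H(3,0), so chi_c = n+4. The same fact makes every star K_{1,m}
reduced, and these are not 0-stars. Conversely, explicit labellings of H_n show that a graph
reduced with s = 0 has no induced K3, K2+K1 or C4, that with s = 1 it has no induced P3 or K2+K1,
and that s >= 2 leaves no nonempty reduced graph; these forbidden configurations force a 1-star. *)

From mathcomp Require Import all_boot zify.
Set Implicit Arguments. Unset Strict Implicit. Unset Printing Implicit Defensive.

Lemma adj_neq (G : graph) (x y : V G) : adj x y -> x != y.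
Proof. by apply: contraTneq => ->; rewrite adj_irr. Qed.

Lemma embeds_refl (G : graph) : embeds G G.
Proof. by exists id; split. Qed.

Section EdgeGraph.
Variables (n : nat) (es : seq (nat * nat)).

Definition edge_rel (a b : nat) : bool := (a != b) && (((a, b) \in es) || ((b, a) \in es)).

Lemma edge_rel_sym : symmetric (fun x y : 'I_n => edge_rel x y).
Proof. by move=> x y; rewrite /edge_rel eq_sym orbC. Qed.

Lemma edge_rel_irr : irreflexive (fun x y : 'I_n => edge_rel x y).
Proof. by move=> x; rewrite /edge_rel eqxx. Qed.

Definition edge_graph : graph := Graph edge_rel_sym edge_rel_irr.

End EdgeGraph.

Section DisjointUnion.
Variables G1 G2 : graph.

Definition sum_adj (x y : V G1 + V G2) : bool :=
  match x, y with
  | inl a, inl b => adj a b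
  | inr a, inr b => adj a b
  | _, _ => false
  end.

Lemma sum_adj_sym : symmetric sum_adj.
Proof. by case=> a [] b //=; apply: adj_sym. Qed.

Lemma sum_adj_irr : irreflexive sum_adj.
Proof. by case=> a /=; apply: adj_irr. Qed.

Definition disjoint_union : graph := Graph sum_adj_sym sum_adj_irr.

End DisjointUnion.

Section Triangles.
Variable m : nat.

Definition tri_adj (v w : 'I_m * 'I_3) : bool := (v.1 == w.1) && (v.2 != w.2).

Lemma tri_adj_sym : symmetric tri_adj.
Proof. by move=> v w; rewrite /tri_adj eq_sym [w.2 == _]eq_sym. Qed.

Lemma tri_adj_irr : irreflexive tri_adj.
Proof. by move=> v; rewrite /tri_adj !eqxx. Qed.

Definition triangles : graph := Graph tri_adj_sym tri_adj_irr.

End Triangles.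

Section StarGraph.
Variable m : nat.

Definition star_adj (x y : 'I_m.+1) : bool := (x == ord0) != (y == ord0).

Lemma star_adj_sym : symmetric star_adj.
Proof. by move=> x y; rewrite /star_adj eq_sym. Qed.

Lemma star_adj_irr : irreflexive star_adj.
Proof. by move=> x; rewrite /star_adj eqxx. Qed.

Definition star_graph : graph := Graph star_adj_sym star_adj_irr.

End StarGraph.

Definition K3 : graph := edge_graph 3 [:: (0, 1); (0, 2); (1, 2)].

Definition P3 : graph := edge_graph 3 [:: (0, 1); (1, 2)].

Definition K2K1 : graph := edge_graph 3 [:: (0, 1)].

Definition C4 : graph := edge_graph 4 [:: (0, 1); (1, 2); (2, 3); (0, 3)].

Lemma edge_graph_embeds k es (K : graph) (t : k.-tuple (V K)) :
  uniq t -> (forall i j : 'I_k, i < j -> adj (tnth t i) (tnth t j) = edge_rel es i j) ->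
  embeds (edge_graph k es) K.
Proof.
move=> /tuple_uniqP t_inj t_adj; exists (tnth t); split=> // i j.
case: (ltngtP i j) => [ij | ji | /val_inj ->]; first exact: t_adj.
  by rewrite [LHS]adj_sym t_adj // [RHS]adj_sym.
by rewrite !adj_irr.
Qed.

Lemma embeds_K3 (K : graph) (a b c : V K) : adj a b -> adj a c -> adj b c -> embeds K3 K.
Proof.
move=> ab ac bc; apply: (@edge_graph_embeds _ _ _ [tuple a; b; c]).
  by rewrite /= !inE !negb_or !adj_neq.
by move=> [[|[|[|?]]] ?] [[|[|[|?]]] ?].
Qed.

Lemma embeds_P3 (K : graph) (a b c : V K) :
  a != c -> adj a b -> adj b c -> ~~ adj a c -> embeds P3 K.
Proof.
move=> neq_ac ab bc /negbTE nac; apply: (@edge_graph_embeds _ _ _ [tuple a; b; c]).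
  by rewrite /= !inE !negb_or neq_ac !adj_neq.
by move=> [[|[|[|?]]] ?] [[|[|[|?]]] ?].
Qed.

Lemma embeds_K2K1 (K : graph) (a b c : V K) :
  c != a -> c != b -> adj a b -> ~~ adj c a -> ~~ adj c b -> embeds K2K1 K.
Proof.
move=> ca cb ab nca ncb; apply: (@edge_graph_embeds _ _ _ [tuple a; b; c]).
  by rewrite /= !inE !negb_or adj_neq // ![_ == c]eq_sym ca cb.
by move=> [[|[|[|?]]] ?] [[|[|[|?]]] ?] //= _; rewrite [adj _ c]adj_sym ?(negbTE nca) ?(negbTE ncb).
Qed.

Lemma embeds_C4 (K : graph) (a b c d : V K) :
  a != c -> b != d -> adj a b -> adj b c -> adj c d -> adj a d -> ~~ adj a c -> ~~ adj b d ->
  embeds C4 K.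
Proof.
move=> ac bd ab bc cd ad /negbTE nac /negbTE nbd.
apply: (@edge_graph_embeds _ _ _ [tuple a; b; c; d]).
  by rewrite /= !inE !negb_or ac bd !adj_neq.
by move=> [[|[|[|[|?]]]] ?] [[|[|[|[|?]]]] ?].
Qed.

Lemma star_le (G : graph) s s' : s <= s' -> star s G -> star s' G.
Proof. by move=> le_ss' [S [S_le S_star]]; exists S; split=> //; apply: leq_trans le_ss'. Qed.

Lemma star0_of_free (K : graph) : ~ embeds P3 K -> ~ embeds K2K1 K -> star 0 K.
Proof.
move=> noP3 noK2K1; exists set0; rewrite cards0; split=> //.
split; last by move=> v; rewrite inE.
case: (pickP (fun p : V K * V K => adj p.1 p.2)) => [[u v] /= uv | edgeless]; last first.
  by left=> x y _ _; rewrite (edgeless (x, y)).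
have trans (a b c : V K) : adj a b -> adj b c -> a != c -> adj a c.
  move=> ab bc ac; apply: contraT => nac; case: (noP3 (embeds_P3 ac ab bc nac)).
have to_u w : w != u -> adj w u.
  move=> wu; case: (eqVneq w v) => [-> | wv]; first by rewrite adj_sym.
  apply: contraT => nwu; have [wv' | nwv] := boolP (adj w v).
    by move: nwu; rewrite (trans _ _ _ wv' _ wu) // adj_sym.
  by case: (noK2K1 (embeds_K2K1 wu wv uv nwu nwv)).
right=> x y _ _ xy.
case: (eqVneq x u) => [exu | xu]; first by move: xy; rewrite exu eq_sym adj_sym; apply: to_u.
case: (eqVneq y u) => [-> | yu]; first exact: to_u.
by apply: trans (to_u x xu) _ xy; rewrite adj_sym to_u.
Qed.

Lemma star1_of_dominating (K : graph) (c : V K) :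
  ~ embeds K3 K -> (forall x, x != c -> adj c x) -> star 1 K.
Proof.
move=> noK3 c_dom; exists [set c]; rewrite cards1; split=> //.
split=> [| _ /set1P ->]; last by left=> x; rewrite inE; apply: c_dom.
left=> x y; rewrite !inE => xc yc; apply/negP => xy.
exact: noK3 (embeds_K3 (c_dom x xc) (c_dom y yc) xy).
Qed.

Lemma star1_of_free (K : graph) :
  ~ embeds K3 K -> ~ embeds K2K1 K -> ~ embeds C4 K -> star 1 K.
Proof.
move=> noK3 noK2K1 noC4.
case: (pickP (fun p : V K * V K => adj p.1 p.2)) => [[u v] /= uv | edgeless]; last first.
  exists set0; rewrite cards0; split=> //; split; last by move=> w; rewrite inE.
  by left=> x y _ _; rewrite (edgeless (x, y)).
have touch (a b c : V K) : adj a b -> c != a -> c != b -> adj c a || adj c b.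
  move=> ab ca cb; apply: contraT; rewrite negb_or => /andP [nca ncb].
  case: (noK2K1 (embeds_K2K1 ca cb ab nca ncb)).
case: (pickP (fun x => (x != u) && ~~ adj u x)) => [x /andP [xu nux] | u_dom]; last first.
  by apply: (star1_of_dominating (c := u) noK3) => x xu; have := u_dom x; rewrite xu => /negbFE.
case: (pickP (fun y => (y != v) && ~~ adj v y)) => [y /andP [yv nvy] | v_dom]; last first.
  by apply: (star1_of_dominating (c := v) noK3) => y yv; have := v_dom y; rewrite yv => /negbFE.
have xv : x != v by apply: contraNneq nux => ->.
have yu : y != u by apply: contraNneq nvy => ->; rewrite adj_sym.
have vx : adj v x by move: (touch _ _ _ uv xu xv); rewrite [adj x u]adj_sym (negbTE nux) adj_sym.
have uy : adj u y.
  by move: (touch _ _ _ uv yu yv); rewrite [adj y v]adj_sym (negbTE nvy) orbF adj_sym.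
have yx : y != x by apply: contraNneq nux => <-.
have xy : adj x y.
  by move: (touch _ _ _ vx yv yx); rewrite [adj y v]adj_sym (negbTE nvy) adj_sym.
have [ux vy] : u != x /\ v != y by rewrite ![u == _]eq_sym ![v == _]eq_sym.
case: (noC4 (embeds_C4 ux vy uv vx xy uy nux nvy)).
Qed.

(** * Partitions as labellings *)

(** [f] encodes a partition: label 0 is an unconstrained part, labels 1..s are stable sets and
larger labels are cliques. *)
Definition parted (G : graph) (s : nat) (f : V G -> nat) : Prop :=
  forall x y, x != y -> f x = f y -> 0 < f x -> adj x y = (s < f x).

Section Parted.
Variables (G : graph) (s : nat) (f : V G -> nat).
Hypothesis f_parted : parted s f.

Lemma parted_stable_part i : 0 < i <= s -> stable_part (fun x => f x == i).
Proof.
move=> /andP [i_gt0 i_le] x y /eqP fx /eqP fy; case: (eqVneq x y) => [-> | xy].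
  by rewrite adj_irr.
by rewrite f_parted ?fx ?fy // -ltnNge ltnS.
Qed.

Lemma parted_clique_part i : s < i -> clique_part (fun x => f x == i).
Proof.
by move=> lt_si x y /eqP fx /eqP fy xy; rewrite f_parted ?fx ?fy //; apply: leq_ltn_trans lt_si.
Qed.

Lemma parted_comp (H : graph) (e : V H -> V G) :
  injective e -> (forall x y, adj (e x) (e y) = adj x y) -> parted s (f \o e).
Proof. by move=> e_inj e_adj x y xy; rewrite -e_adj; apply: f_parted; rewrite inj_eq. Qed.

Lemma parted_zero (P : pred (V G)) : parted s (fun x => if P x then 0 else f x).
Proof. by move=> x y xy; case: (P x); case: (P y) => // fxy; [rewrite fxy | apply: f_parted]. Qed.

Lemma parted_widen s' : s <= s' -> (forall x, f x <= s) -> parted s' f.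
Proof.
move=> le_ss' f_le x y xy fxy f_gt0; rewrite f_parted //.
by have := f_le x; lia.
Qed.

End Parted.

Lemma parted_pred (G : graph) s (f : V G -> nat) : parted s.+1 f -> parted s (fun x => (f x).-1).
Proof. by move=> f_parted x y xy fxy f_gt0; rewrite f_parted //; lia. Qed.

Lemma HstP (G : graph) s t :
  Hst s t G <-> exists f : V G -> nat, parted s f /\ forall x, 0 < f x <= s + t.
Proof.
rewrite /Hst; split=> [[p p_parts] | [f [f_parted f_bound]]].
  exists (fun x => (p x).+1); split=> [x y xy [/val_inj pxy] _ | x]; last by rewrite ltn_ord.
  have := p_parts (p x); rewrite ltnS; case: ltnP => [lt_ps | le_sp] part.
    by apply/negbTE; apply: part; rewrite ?pxy.
  by apply: part; rewrite ?pxy.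
have lt_f x : (f x).-1 < s + t by have := f_bound x; lia.
exists (fun x => Ordinal (lt_f x)) => i.
have fE x : (Ordinal (lt_f x) == i) = (f x == i.+1).
  by rewrite -val_eqE /=; have := f_bound x; lia.
case: ifP => [lt_is | /negbT le_si] x y; rewrite !fE.
  exact: (parted_stable_part f_parted).
by apply: (parted_clique_part f_parted); rewrite ltnS leqNgt.
Qed.

Lemma Hst_mono (G : graph) s t s' t' : s <= s' -> t <= t' -> Hst s t G -> Hst s' t' G.
Proof.
move=> le_ss' le_tt' /HstP [f [f_parted f_bound]]; apply/HstP.
exists (fun x => if f x <= s then f x else f x + (s' - s)); split=> [x y xy | x].
  by case: ifP; case: ifP => ? ? fxy f_gt0; rewrite f_parted //; lia.
by have := f_bound x; case: ifP; lia.
Qed.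

Lemma part_embeds_sub (G J : graph) (P Q : pred (V G)) :
  (forall x, Q x -> P x) -> part_embeds P J -> part_embeds Q J.
Proof. by move=> QP [phi phi_P]; exists phi => x y /QP Px /QP Py; apply: phi_P. Qed.

Lemma part_embeds_comp (G H J : graph) (e : V H -> V G) (P : pred (V G)) :
  injective e -> (forall x y, adj (e x) (e y) = adj x y) ->
  part_embeds P J -> part_embeds (fun x => P (e x)) J.
Proof.
move=> e_inj e_adj [phi phi_P]; exists (phi \o e) => x y Px Py.
have [phi_inj phi_adj] := phi_P _ _ Px Py.
by split=> [/phi_inj /e_inj | /=]; rewrite ?phi_adj.
Qed.

Lemma part_embeds_trans (G J K : graph) (P : pred (V G)) :
  part_embeds P J -> embeds J K -> part_embeds P K.
Proof.
move=> [phi phi_P] [g [g_inj g_adj]]; exists (g \o phi) => x y Px Py.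
by have [phi_inj <-] := phi_P _ _ Px Py; split=> [/g_inj /phi_inj | /=].
Qed.

Lemma part_embeds_subsingleton (G J : graph) (P : pred (V G)) (k0 : V J) :
  (forall x y, P x -> P y -> x = y) -> part_embeds P J.
Proof. by move=> P1; exists (fun=> k0) => x y Px Py; rewrite (P1 x y Px Py) !adj_irr. Qed.

Definition reduced_at (F : family) (J : graph) (l s : nat) : Prop :=
  forall G (p : V G -> 'I_l),
    (forall i : 'I_l,
       if val i == 0 then part_embeds (fun x => p x == i) J
       else if val i <= s then stable_part (fun x => p x == i)
       else clique_part (fun x => p x == i)) ->
    F G.

Lemma reduced_atP (F : family) (J : graph) l s :
  reduced_at F J l.+1 s <->
  forall G (f : V G -> nat), (forall x, f x <= l) -> parted s f ->
    part_embeds (fun x => f x == 0) J -> F G.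
Proof.
split=> [red G f f_le f_parted f_J | red G p p_parts].
  apply: (red G (fun x => inord (f x))) => i.
  have fE x : (inord (f x) == i) = (f x == i) by rewrite -val_eqE /= inordK ?ltnS.
  case: eqP => [i0 | /eqP i_neq0].
    by apply: part_embeds_sub f_J => x; rewrite fE i0.
  case: ifP => [le_is | /negbT lt_si] x y; rewrite !fE.
    by apply: (parted_stable_part f_parted); rewrite lt0n i_neq0.
  by apply: (parted_clique_part f_parted); rewrite ltnNge.
apply: (red G (fun x => val (p x))) => [x | x y xy /val_inj pxy p_gt0 |].
- by rewrite -ltnS ltn_ord.
- have := p_parts (p x); rewrite eqn0Ngt p_gt0 /=.
  case: ifP => [le_ps | /negbT lt_sp] part.
    by rewrite ltnNge le_ps; apply/negbTE; apply: part; rewrite ?pxy.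
  by rewrite ltnNge lt_sp; apply: part; rewrite ?pxy.
- by have := p_parts ord0; apply: part_embeds_sub => x; rewrite -val_eqE.
Qed.

Definition sum_label (G1 G2 : graph) (f1 : V G1 -> nat) (f2 : V G2 -> nat)
    (z : V (disjoint_union G1 G2)) : nat :=
  match z with inl x => f1 x | inr y => f2 y end.

Section SumLabel.
Variables (G1 G2 : graph) (f1 : V G1 -> nat) (f2 : V G2 -> nat).

Lemma parted_sum_label s :
  parted s f1 -> parted s f2 -> (forall x y, f1 x = f2 y -> 0 < f1 x -> f1 x <= s) ->
  parted s (sum_label f1 f2).
Proof.
move=> f1_parted f2_parted shared [x | y] [x' | y'] //= neq f_eq f_gt0.
- exact: f1_parted.
- by have := shared _ _ f_eq f_gt0; rewrite leqNgt => /negbTE ->.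
- have := shared _ _ (esym f_eq); rewrite -f_eq => /(_ f_gt0).
  by rewrite leqNgt => /negbTE ->.
- exact: f2_parted.
Qed.

Lemma part_embeds_sum_label (J : graph) (k0 : V J) :
  part_embeds (fun x => f1 x == 0) J -> (forall y, f2 y != 0) ->
  part_embeds (fun z => sum_label f1 f2 z == 0) J.
Proof.
move=> [phi phi_P] f2_neq0.
exists (fun z => if z is inl x then phi x else k0) => [[x | y] [x' | y']] //=;
  rewrite ?(negbTE (f2_neq0 _)) // => Px Px'.
by have [phi_inj ->] := phi_P _ _ Px Px'; split=> // /phi_inj ->.
Qed.

End SumLabel.

Definition tri_label m (r c : nat) (v : V (triangles m)) : nat :=
  if v.2 < r then v.2.+1 else c + v.1.

Lemma parted_tri_label m r s c : r <= s < c -> parted s (@tri_label m r c).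
Proof.
move=> /andP [le_rs lt_sc] [i k] [j l] neq; rewrite /tri_label /=.
case: ifP => kr; case: ifP => lr fij f_gt0; try lia.
  have kl : k = l by apply: val_inj; case: fij.
  by rewrite /tri_adj /= kl eqxx andbF; apply/esym/negbTE; lia.
have ij : i = j by apply: ord_inj; lia.
have -> : s < c + i by lia.
by move: neq; rewrite /tri_adj /= ij xpair_eqE !eqxx.
Qed.

(** * Sets inducing a subgraph of a star *)

Definition starlike (G : graph) (P : pred (V G)) : Prop :=
  stable_part P \/ exists c, forall x y, P x -> P y -> adj x y = ((x == c) != (y == c)).

Lemma starlike_inl (G1 G2 : graph) (P : pred (V (disjoint_union G1 G2))) :
  starlike P -> starlike (fun x => P (inl x)).
Proof.
case=> [P_stable | [[c | c] c_center]].
- by left=> x y Px Py; exact: (P_stable (inl x) (inl y)).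
- by right; exists c => x y Px Py; exact: (c_center (inl x) (inl y)).
- by left=> x y Px Py; move: (c_center (inl x) (inl y) Px Py) => /= ->.
Qed.

Lemma starlike_triangle (G : graph) (P : pred (V G)) (x y z : V G) :
  starlike P -> P x -> P y -> P z -> adj x y -> adj y z -> adj x z -> False.
Proof.
case=> [P_stable | [c c_center]] Px Py Pz xy yz xz.
  by move: (P_stable _ _ Px Py); rewrite xy.
move: xy yz xz; rewrite !c_center //.
by case: (x == c); case: (y == c); case: (z == c).
Qed.

Lemma starlike_part_embeds_star (G : graph) (P : pred (V G)) m :
  part_embeds P (star_graph m) -> starlike P.
Proof.
move=> [phi phi_P].
case: (pickP (fun c => P c && (phi c == ord0))) => [c /andP [Pc phi_c] | no_center].
  right; exists c => x y Px Py; have [_ <-] := phi_P _ _ Px Py.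
  have phi0 z : P z -> (phi z == ord0) = (z == c).
    move=> Pz; apply/eqP/eqP => [phi_z | ->]; last exact/eqP.
    by apply: (phi_P _ _ Pz Pc).1; rewrite phi_z (eqP phi_c).
  by rewrite /= /star_adj !phi0.
left=> x y Px Py; have [_ <-] := phi_P _ _ Px Py.
by rewrite /= /star_adj; have := no_center x; have := no_center y; rewrite Px Py /= => -> ->.
Qed.

Lemma parted0_stable_size (G : graph) m (f : V G -> nat) (xs : seq (V G)) :
  parted 0 f -> uniq xs -> {in xs &, forall x y, ~~ adj x y} ->
  {in xs, forall x, 0 < f x <= m} -> size xs <= m.
Proof.
move=> f_parted xs_uniq xs_stable f_bound.
have f_inj : {in xs &, injective f}.
  move=> x y x_in y_in fxy; apply/eqP; apply: contraNT (xs_stable x y x_in y_in) => xy.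
  by rewrite f_parted //; have /andP [] := f_bound x x_in.
rewrite -(size_map f) -(size_iota 1 m) uniq_leq_size ?map_inj_in_uniq //.
by move=> _ /mapP [x x_in ->]; rewrite mem_iota; have := f_bound x x_in; lia.
Qed.

Lemma all_iotaP n (P : pred nat) : reflect (forall i : 'I_n, P i) (all P (iota 0 n)).
Proof.
apply: (iffP allP) => [P_all i | P_all a]; first by apply: P_all; rewrite mem_iota ltn_ord.
by rewrite mem_iota => /andP [_ lt_an]; apply: (P_all (Ordinal lt_an)).
Qed.

Lemma parted_edge_graph n es s (ls : seq nat) :
  all (fun a => all (fun b =>
      [&& a != b, nth 0 ls a == nth 0 ls b & 0 < nth 0 ls a] ==>
      (edge_rel es a b == (s < nth 0 ls a)))
    (iota 0 n)) (iota 0 n) ->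
  parted s (fun x : V (edge_graph n es) => nth 0 ls x).
Proof.
move=> /all_iotaP ls_parted x y xy fxy f_gt0; apply/eqP.
have /all_iotaP/(_ y)/implyP := ls_parted x; apply.
by rewrite f_gt0 fxy eqxx !andbT.
Qed.

Lemma part_embeds_edge_graph n es k es' (ls zs : seq nat) :
  size zs = k.+1 ->
  all (fun a => (nth 0 ls a == 0) ==> (a \in zs)) (iota 0 n) ->
  all (fun a => all (fun b => edge_rel es' (index a zs) (index b zs) == edge_rel es a b) zs) zs ->
  part_embeds (fun x : V (edge_graph n es) => nth 0 ls x == 0) (edge_graph k.+1 es').
Proof.
move=> size_zs /all_iotaP zero_in /allP zs_adj.
exists (fun x : 'I_n => inord (index (x : nat) zs) : 'I_k.+1).
move=> x y /(implyP (zero_in x)) x_in /(implyP (zero_in y)) y_in.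
have idxK z : z \in zs -> (inord (index z zs) : 'I_k.+1) = index z zs :> nat.
  by move=> z_in; rewrite inordK // -size_zs index_mem.
split=> [/(congr1 (@nat_of_ord _)) | /=]; rewrite !idxK //.
  by move=> idx_xy; apply: ord_inj; rewrite -(nth_index 0 x_in) idx_xy nth_index.
exact/eqP/(allP (zs_adj _ x_in)).
Qed.

Fixpoint bool_seqs (n : nat) : seq (seq bool) :=
  if n is n'.+1 then [seq b :: m | b <- [:: true; false], m <- bool_seqs n'] else [:: [::]].

Lemma mem_bool_seqs (m : seq bool) : m \in bool_seqs (size m).
Proof.
elim: m => [|b m IH] //.
by apply: (@allpairs_f _ _ _ (fun b m => b :: m) [:: true; false]); case: b.
Qed.

Lemma nth_map_enum_ord n (A : pred 'I_n) (i : 'I_n) :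
  nth false [seq A j | j <- enum 'I_n] i = A i.
Proof. by rewrite (nth_map i) ?size_enum_ord // nth_ord_enum. Qed.

Definition starlike_nat (e : rel nat) (n : nat) (A : pred nat) : bool :=
  let pairs Q := all (fun a => all (Q a) (iota 0 n)) (iota 0 n) in
  pairs (fun a b => A a && A b ==> ~~ e a b) ||
  has (fun c => pairs (fun a b => A a && A b ==> (e a b == ((a == c) != (b == c))))) (iota 0 n).

Lemma starlike_nat_mask n es (e : rel nat) (A : pred (V (edge_graph n es))) :
  (forall a b : 'I_n, e a b = edge_rel es a b) ->
  starlike A -> starlike_nat e n (nth false [seq A i | i <- enum 'I_n]).
Proof.
move=> eE [A_stable | [c c_center]]; apply/orP; [left | right; apply/hasP; exists (val c)].
- apply/all_iotaP => a; apply/all_iotaP => b; rewrite !nth_map_enum_ord eE.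
  by apply/implyP => /andP [Aa Ab]; apply: A_stable.
- by rewrite mem_iota ltn_ord.
apply/all_iotaP => a; apply/all_iotaP => b; rewrite !nth_map_enum_ord eE.
by apply/implyP => /andP [Aa Ab]; apply/eqP; exact: c_center.
Qed.

Definition stable_triple_off (e : rel nat) (n : nat) (A : pred nat) : bool :=
  let I := iota 0 n in
  has (fun a => has (fun b => has (fun c => let ts := [:: a; b; c] in
    [&& uniq ts, all (fun x => ~~ A x) ts & all (fun x => all (fun y => ~~ e x y) ts) ts]) I) I) I.

Definition rel_table (e : rel nat) (n : nat) : seq (seq bool) :=
  [seq [seq e a b | b <- iota 0 n] | a <- iota 0 n].

Definition table_rel (t : seq (seq bool)) : rel nat := fun a b => nth false (nth [::] t a) b.

Lemma table_relE (e : rel nat) n a b : a < n -> b < n -> table_rel (rel_table e n) a b = e a b.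
Proof. by move=> lt_an lt_bn; rewrite /table_rel !(nth_map 0) ?size_iota // !nth_iota. Qed.

(** * The graphs H_n *)

Definition e1_edges : seq (nat * nat) :=
  [:: (0, 1); (0, 2); (0, 6); (1, 2); (1, 5); (1, 8); (2, 7); (3, 4);
      (3, 5); (3, 8); (4, 5); (5, 6); (5, 8); (6, 7); (6, 8); (7, 8)].

Definition E1 : graph := edge_graph 9 e1_edges.

Definition e1_label (ls : seq nat) (x : V E1) : nat := nth 0 ls x.

Lemma e1_label_bound (ls : seq nat) lo hi :
  all (fun a => lo <= nth 0 ls a <= hi) (iota 0 9) -> forall x, lo <= e1_label ls x <= hi.
Proof. by move/all_iotaP. Qed.

Definition Hn (n : nat) : graph := disjoint_union E1 (triangles n.+1).

(** The adjacency table is evaluated once, which keeps [vm_compute] fast. *)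
Lemma E1_starlike_check :
  let e := table_rel (rel_table (edge_rel e1_edges) 9) in
  all (fun m => starlike_nat e 9 (nth false m) ==> stable_triple_off e 9 (nth false m))
    (bool_seqs 9).
Proof. by vm_compute. Qed.

Lemma E1_stable_triple_off (A : pred (V E1)) : starlike A ->
  exists ts : seq (V E1),
    [/\ size ts = 3, uniq ts, {in ts &, forall x y, ~~ adj x y} & {in ts, forall x, ~~ A x}].
Proof.
pose e := table_rel (rel_table (edge_rel e1_edges) 9).
have eE (a b : 'I_9) : e a b = edge_rel e1_edges a b by apply: table_relE.
move=> /(starlike_nat_mask eE); set m := map A _ => A_starlike.
have := mem_bool_seqs m; rewrite size_map size_enum_ord => /(allP E1_starlike_check).
rewrite A_starlike => /hasP [a a_in /hasP [b b_in /hasP [c c_in]]].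
move=> /and3P [abc_uniq abc_off abc_stable].
have abc_lt x : x \in [:: a; b; c] -> x < 9.
  by rewrite !inE => /or3P [] /eqP ->; [move: a_in | move: b_in | move: c_in]; rewrite mem_iota.
exists [seq inord x | x <- [:: a; b; c]]; split=> //.
- rewrite map_inj_in_uniq // => x y x_in y_in /(congr1 (@nat_of_ord _)).
  by rewrite !inordK ?abc_lt.
- move=> _ _ /mapP [x x_in ->] /mapP [y y_in ->].
  by rewrite -[adj _ _]eE !inordK ?abc_lt //; apply: (allP (allP abc_stable x x_in)).
- move=> _ /mapP [x x_in ->].
  by rewrite -nth_map_enum_ord inordK ?abc_lt //; apply: (allP abc_off).
Qed.

Lemma parted_Hn n s r c (g : V E1 -> nat) :
  r <= s < c -> parted s g -> (forall a, g a < c) ->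
  parted s (sum_label g (@tri_label n.+1 r c) : V (Hn n) -> nat).
Proof.
move=> /andP [le_rs lt_sc] g_parted g_lt; apply: parted_sum_label => //.
  by apply: parted_tri_label; rewrite le_rs.
move=> a [j k]; rewrite /tri_label /=; case: ifP => kr ga _; first lia.
by have := g_lt a; lia.
Qed.

Lemma Hn_not_starlike_cliques n (f : V (Hn n) -> nat) :
  parted 0 f -> (forall x, f x <= n.+3) -> ~ starlike (fun x => f x == 0).
Proof.
move=> f_parted f_le A_starlike.
have [ts [ts_size ts_uniq ts_stable ts_off]] := E1_stable_triple_off (starlike_inl A_starlike).
have off_triangle (j : 'I_n.+1) : exists k, f (inr (j, k)) != 0.
  case: (pickP (fun k => f (inr (j, k)) != 0)) => [k nz | all_zero]; first by exists k.
  have zero k : f (inr (j, k)) == 0 by rewrite -[_ == 0]negbK all_zero.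
  pose o (k : nat) (lt_k3 : k < 3) : V (Hn n) := inr (j, Ordinal lt_k3).
  have o_adj k l (lt_k3 : k < 3) (lt_l3 : l < 3) : k != l -> adj (o k lt_k3) (o l lt_l3).
    by rewrite /= /tri_adj /= eqxx.
  by case: (starlike_triangle A_starlike (zero _) (zero _) (zero _)
     (o_adj 0 1 isT isT isT) (o_adj 1 2 isT isT isT) (o_adj 0 2 isT isT isT)).
pose xs : seq (V (Hn n)) :=
  map inl ts ++ [seq inr (j, xchoose (off_triangle j)) | j <- enum 'I_n.+1].
suff: size xs <= n.+3 by rewrite /xs size_cat 2!size_map size_enum_ord ts_size ltnn.
apply: (parted0_stable_size f_parted).
- rewrite cat_uniq map_inj_uniq; last by move=> x y [].
  rewrite map_inj_uniq ?enum_uniq; last by move=> j j' [].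
  by rewrite ts_uniq andbT; apply/hasPn => _ /mapP [j _ ->]; apply/mapP => -[x].
- move=> u v; rewrite !mem_cat => /orP [] /mapP [x x_in ->] /orP [] /mapP [y y_in ->] //=.
    exact: ts_stable.
  by rewrite /tri_adj /=; case: eqP => // <-; rewrite eqxx.
- move=> u; rewrite mem_cat => /orP [] /mapP [x x_in ->]; rewrite f_le andbT lt0n.
    exact: ts_off.
  exact: xchooseP (off_triangle x).
Qed.

Lemma Hst1_Forb_Hn n (G : graph) : Hst 1 n.+3 G -> Forb (Hn n) G.
Proof.
move=> /HstP [f [f_parted f_bound]] [e [e_inj e_adj]].
have fe_parted := parted_comp f_parted e_inj e_adj.
apply: (Hn_not_starlike_cliques (parted_pred fe_parted)) => [x | ].
  by have := f_bound (e x); rewrite /=; lia.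
left=> x y fx fy; apply: (parted_stable_part fe_parted (i := 1)) => //=.
  by have := f_bound (e x); move: fx; rewrite /=; lia.
by have := f_bound (e y); move: fy; rewrite /=; lia.
Qed.

Lemma Hn_Hst0 n : Hst 0 n.+4 (Hn n).
Proof.
pose ls := [:: 1; 1; 1; 2; 2; 2; 3; 3; 3].
have ls_bound := @e1_label_bound ls 1 3 isT.
apply/HstP; exists (sum_label (e1_label ls) (@tri_label n.+1 0 4)); split.
  by apply: parted_Hn => [| | a]; [| apply: parted_edge_graph | have := ls_bound a; lia].
case=> [a | [j k]] /=; first by have := ls_bound a; lia.
by rewrite /tri_label /=; have := ltn_ord j; lia.
Qed.

Lemma Hn_Hst2 n : Hst 2 n.+2 (Hn n).
Proof.
pose ls := [:: 2; 3; 1; 1; 2; 3; 1; 2; 3].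
have ls_bound := @e1_label_bound ls 1 3 isT.
apply/HstP; exists (sum_label (e1_label ls) (@tri_label n.+1 2 4)); split.
  by apply: parted_Hn => [| | a]; [| apply: parted_edge_graph | have := ls_bound a; lia].
case=> [a | [j k]] /=; first by have := ls_bound a; lia.
by rewrite /tri_label /=; case: ifP; have := ltn_ord j; lia.
Qed.

Lemma Hn_Hst3 n : Hst 3 0 (Hn n).
Proof.
pose ls := [:: 1; 2; 3; 2; 3; 1; 2; 1; 3].
have ls_bound := @e1_label_bound ls 1 3 isT.
apply/HstP; exists (sum_label (e1_label ls) (@tri_label n.+1 3 4)); split.
  by apply: parted_Hn => [| | a]; [| apply: parted_edge_graph | have := ls_bound a; lia].
case=> [a | [j k]] /=; first by have := ls_bound a; lia.
by rewrite /tri_label /= (ltn_ord k); have := ltn_ord k; lia.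
Qed.

Lemma Hn_Hst n s t : n.+4 < s + t -> Hst s t (Hn n).
Proof.
move=> lt_st; case: (ltnP s 2) => [lt_s2 | le_2s].
  by apply: Hst_mono (Hn_Hst0 n); lia.
case: (ltnP s 3) => [lt_s3 | le_3s]; first by apply: Hst_mono (Hn_Hst2 n); lia.
exact: Hst_mono (Hn_Hst3 n).
Qed.

Lemma is_chi_c_unique (F : family) l l' : is_chi_c F l -> is_chi_c F l' -> l = l'.
Proof. by move=> [ok_l max_l] [ok_l' max_l']; apply/eqP; rewrite eqn_leq max_l ?max_l'. Qed.

Lemma chi_Hn n : is_chi_c (Forb (Hn n)) n.+4.
Proof.
split=> [| l [s le_sl Hst_sub]]; first by exists 1 => // G; apply: Hst1_Forb_Hn.
rewrite leqNgt; apply/negP => lt_l.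
by apply: (Hst_sub _ (Hn_Hst _)) (embeds_refl _); lia.
Qed.

(** * Reduced graphs of Forb(H_n) *)

Section ReducedHn.
Variables (n : nat) (K : graph).

Lemma reduced_at_Hn_pattern s (P : graph) (p0 : V P) (ls : seq nat) :
  s < 3 -> reduced_at (Forb (Hn n)) K n.+4 s ->
  all (fun a => nth 0 ls a <= 2) (iota 0 9) -> parted s (e1_label ls) ->
  part_embeds (fun x => e1_label ls x == 0) P -> ~ embeds P K.
Proof.
move=> lt_s3 /reduced_atP red /(@e1_label_bound ls 0 2) ls_bound ls_parted ls_P P_K.
apply: (red (Hn n) (sum_label (e1_label ls) (@tri_label n.+1 s 3))) (embeds_refl _).
- case=> [a | [j k]] /=; first by have := ls_bound a; lia.
  by rewrite /tri_label /=; case: ifP => _; have := ltn_ord j; have := ltn_ord k; lia.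
- by apply: parted_Hn => [| | a]; [rewrite leqnn | | have := ls_bound a; lia].
- apply: part_embeds_trans P_K; apply: part_embeds_sum_label p0 ls_P _ => -[j k].
  by rewrite /tri_label; case: ifP.
Qed.

Lemma reduced_at0_Hn : reduced_at (Forb (Hn n)) K n.+4 0 ->
  [/\ ~ embeds K3 K, ~ embeds K2K1 K & ~ embeds C4 K].
Proof.
move=> red; split.
- apply: (@reduced_at_Hn_pattern 0 K3 ord0 [:: 0; 0; 0; 1; 1; 1; 2; 2; 2]) => //.
    exact: parted_edge_graph.
  exact: (@part_embeds_edge_graph _ _ _ _ _ [:: 0; 1; 2]).
- apply: (@reduced_at_Hn_pattern 0 K2K1 ord0 [:: 1; 1; 1; 0; 0; 2; 2; 0; 2]) => //.
    exact: parted_edge_graph.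
  exact: (@part_embeds_edge_graph _ _ _ _ _ [:: 3; 4; 7]).
- apply: (@reduced_at_Hn_pattern 0 C4 ord0 [:: 0; 0; 1; 2; 2; 2; 0; 1; 0]) => //.
    exact: parted_edge_graph.
  exact: (@part_embeds_edge_graph _ _ _ _ _ [:: 0; 1; 8; 6]).
Qed.

Lemma reduced_at1_Hn : reduced_at (Forb (Hn n)) K n.+4 1 -> ~ embeds P3 K /\ ~ embeds K2K1 K.
Proof.
move=> red; split.
- apply: (@reduced_at_Hn_pattern 1 P3 ord0 [:: 0; 1; 0; 2; 1; 2; 0; 1; 2]) => //.
    exact: parted_edge_graph.
  exact: (@part_embeds_edge_graph _ _ _ _ _ [:: 2; 0; 6]).
- apply: (@reduced_at_Hn_pattern 1 K2K1 ord0 [:: 0; 0; 1; 2; 1; 2; 1; 0; 2]) => //.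
    exact: parted_edge_graph.
  exact: (@part_embeds_edge_graph _ _ _ _ _ [:: 0; 1; 7]).
Qed.

Lemma reduced_at2_Hn : reduced_at (Forb (Hn n)) K n.+4 2 -> V K -> False.
Proof.
move=> /reduced_atP red k0.
pose ls := [:: 2; 3; 1; 1; 2; 3; 1; 2; 3].
have ls_bound := @e1_label_bound ls 1 3 isT.
pose f := sum_label (e1_label ls) (@tri_label n.+1 2 4).
(* Only n clique labels remain for the n+1 triangles, so the clique vertex of the last triangle,
   labelled n+4, is moved to the free part. *)
have f_zero x : (if n.+3 < f x then 0 else f x) == 0 -> x = inr (ord_max, ord_max).
  case: x => [a | [j k]]; rewrite /f /=; first by have := ls_bound a; case: ifP; lia.
  move=> f0; have [-> ->] // : j = ord_max /\ k = ord_max.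
  move: f0; rewrite /tri_label /=; have := ltn_ord j; have := ltn_ord k.
  by case: (ltnP k 2) => /= ? ? ?; case: ifP => ? /eqP ?; split; apply: ord_inj => /=; lia.
apply: (red (Hn n) (fun x => if n.+3 < f x then 0 else f x)) (embeds_refl _).
- by move=> x; case: ifP => //; lia.
- apply: parted_zero; apply: parted_Hn => [| | a]; [by [] | exact: parted_edge_graph |].
  by have := ls_bound a; lia.
- by apply: (part_embeds_subsingleton k0) => x y /f_zero -> /f_zero ->.
Qed.

Lemma reduced_at3_Hn s : 3 <= s -> reduced_at (Forb (Hn n)) K n.+4 s -> V K -> False.
Proof.
move=> le_3s /reduced_atP red k0.
pose ls := [:: 1; 2; 3; 2; 3; 1; 2; 1; 3].
have ls_bound := @e1_label_bound ls 1 3 isT.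
pose f := sum_label (e1_label ls) (@tri_label n.+1 3 4).
have f_bound x : 0 < f x <= 3.
  case: x => [a | [j k]]; first exact: ls_bound.
  by rewrite /f /tri_label /= (ltn_ord k); have := ltn_ord k; lia.
apply: (red (Hn n) f) (embeds_refl _).
- by move=> x; have := f_bound x; lia.
- apply: (parted_widen (s := 3)) => // [| x]; last by have /andP [] := f_bound x.
  by apply: parted_Hn => [| | a]; [| apply: parted_edge_graph | have := ls_bound a; lia].
- apply: (part_embeds_subsingleton k0) => x y; have := f_bound x; lia.
Qed.

End ReducedHn.

Lemma Hn_critical1 n : critical 1 (Hn n).
Proof.
exists 1 => K [l [chi_l [s lt_sl red]]] /card_gt0P [k0 _].
have el := is_chi_c_unique chi_l (chi_Hn n); subst l.
case: s lt_sl red => [| [| [| s]]] _ red.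
- by have [noK3 noK2K1 noC4] := reduced_at0_Hn red; apply: star1_of_free.
- by have [noP3 noK2K1] := reduced_at1_Hn red; apply: star_le (star0_of_free noP3 noK2K1).
- by case: (reduced_at2_Hn red k0).
- by case: (reduced_at3_Hn _ red k0).
Qed.

Lemma star_graph_reduced n m : reduced (Forb (Hn n)) (star_graph m).
Proof.
exists n.+4; split; first exact: chi_Hn.
exists 0 => //; apply/reduced_atP => G f f_le f_parted f_star [e [e_inj e_adj]].
apply: (Hn_not_starlike_cliques (parted_comp f_parted e_inj e_adj)) => [x | ].
  exact: f_le.
exact: starlike_part_embeds_star (part_embeds_comp e_inj e_adj f_star).
Qed.

Lemma star_graph_not_star0 m : 1 < m -> ~ star 0 (star_graph m).
Proof.
move=> lt_1m [S [S0 [S_part _]]].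
have S_eq : S = set0 by apply: cards0_eq; apply/eqP; rewrite -leqn0.
rewrite {}S_eq in S_part.
have [lt_1m' lt_2m'] : 1 < m.+1 /\ 2 < m.+1 by lia.
case: S_part => [stable | clique].
  by have := stable ord0 (Ordinal lt_1m'); rewrite !inE => /(_ isT isT).
by have := clique (Ordinal lt_1m') (Ordinal lt_2m'); rewrite !inE => /(_ isT isT isT).
Qed.

Lemma Hn_not_critical0 n : ~ critical 0 (Hn n).
Proof.
move=> [n0 crit]; apply: (@star_graph_not_star0 n0.+2) => //.
by apply: crit; [exact: star_graph_reduced | rewrite card_ord; lia].
Qed.

Theorem theorem2p6 :
  exists Hs : nat -> graph,
    (forall i j, i <> j -> ~ iso (Hs i) (Hs j)) /\
    (forall i, critical 1 (Hs i) /\ ~ critical 0 (Hs i)).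
Proof.
exists Hn; split=> [i j ij [f [/bij_eq_card card_eq _]] | i].
  by move: card_eq; rewrite !card_sum !card_prod !card_ord; lia.
by split; [exact: Hn_critical1 | exact: Hn_not_critical0].
Qed.
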